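(* For $j \geq 0$, define $t_{2j} = (ca)^j$ and $t_{2j+1} = a(ca)^j$. Let $k_i$ denote the $i$-th row in the matrix $K$. Then $k_i = t_i(k_0)$.
   Context: Let $X_3=\{0,1,2\}$. Define matrices $K_n$ of size $3^n \times n$ with entries in $X_3$ recursively by \[ K_1 = \begin{bmatrix} 0 \\ 1 \\ 2 \end{bmatrix}, \qquad K_{n+1} = \begin{bmatrix} K_n & 0_n \\ K_n^R & 1_n \\ K_n & 2_n \end{bmatrix}, \] where $K_n^R$ is obtained from $K_n$ by reversing the order of its rows, and $0_n$, $1_n$, $2_n$ are column vectors with $3^n$ entries all equal to $0$, $1$, $2$ respectively. Since $K_n$ is the upper left corner of $K_{n+1}$, the infinite limit matrix $K=\lim_{n\to\infty} K_n$ is well defined; rows are indexed starting from $0$, and each row is regarded as an infinite word over $X_3$ ending in $0^\infty$ (so $k_0 = 0^\infty$). The maps $a$ and $c$ are the ternary tree automorphisms (acting on finite and infinite words over $X_3$) defined recursively for $\{i,j\}=\{0,1\}$ (for $a$) and $\{i,j\}=\{1,2\}$ (for $c$) by: $a_{ij}(\emptyset)=\emptyset$, $a_{ij}(iw)=jw$, $a_{ij}(jw)=iw$, $a_{ij}(xw)=x\,a_{ij}(w)$ for $x\notin\{i,j\}$; i.e. $a=a_{01}$ changes the first occurrence of $0$ or $1$ in a word to the other symbol, and $c=a_{12}$ changes the first occurrence of $1$ or $2$ to the other symbol. Composition is from right to left. *)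

From mathcomp Require Import all_boot.
Set Implicit Arguments. Unset Strict Implicit. Unset Printing Implicit Defensive.

(* Letters of X_3 = {0,1,2} are represented as natural numbers; all words
   below only ever take values in {0,1,2}.
   An infinite word over X_3 is a function nat -> nat (position -> letter). *)
Definition word := nat -> nat.

(* Entry (r, j) of K_n (0-indexed row r < 3^n, column j < n), following the
   recursion K_{n+1} = [K_n 0_n ; K_n^R 1_n ; K_n 2_n]. *)
Fixpoint Kn (n : nat) (r j : nat) : nat :=
  match n with
  | 0 => 0
  | m.+1 =>
      if j == m then r %/ 3 ^ m
      else if r %/ 3 ^ m == 1 then Kn m (3 ^ m - 1 - r %% 3 ^ m) j
      else Kn m (r %% 3 ^ m) j
  end.
(* Note: K_1 = [0;1;2] is the instance n = 0 of the recursion (K_0 has 1 row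
   and no columns), and Kn 1 r 0 = r for r < 3. *)

(* Entry (r, j) of the limit matrix K: K_N for N large enough (N > j and
   3^N > r); the infinite row k_r is padded with 0^infinity, which is what
   K_N gives at columns j with 3^j > r. *)
Definition Kentry (r j : nat) : nat := Kn (r + j + 1) r j.

Definition krow (i : nat) : word := fun j => Kentry i j.

(* a_{ij}: swap the first occurrence of i or j (identity if none occurs). *)
Definition aswap (x y : nat) (w : word) : word := fun n =>
  if has (fun m => (w m == x) || (w m == y)) (iota 0 n) then w n
  else if w n == x then y else if w n == y then x else w n.

Definition a_aut : word -> word := aswap 0 1.
Definition c_aut : word -> word := aswap 1 2.

Definition t_aut (i : nat) (w : word) : word :=
  let v := iter i./2 (fun u => c_aut (a_aut u)) w in
  if odd i then a_aut v else v.

From mathcomp Require Import all_boot zify.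
Set Implicit Arguments. Unset Strict Implicit. Unset Printing Implicit Defensive.

(* Row k_r of K is the ternary reflected Gray code of r: its letter j is the
   base-3 digit d_j of r, replaced by 2 - d_j when floor(r / 3^(j+1)) is odd;
   reversing the middle block in the recursion of K_n is what complements the
   lower digits.  Incrementing r changes exactly one letter of this code, the
   first one lying in {0,1} if r is even and in {1,2} if r is odd, and it
   swaps that pair.  Hence k_(r+1) is a(k_r) or c(k_r) according to the parity
   of r, which is also how t_(r+1) arises from t_r. *)

Definition reflected_digit (q : nat) : nat :=
  if odd (q %/ 3) then 2 - q %% 3 else q %% 3.

Definition gray_word (r : nat) : word := fun j => reflected_digit (r %/ 3 ^ j).

Lemma reflected_digitE q d : d < 3 ->
  reflected_digit (q * 3 + d) = if odd q then 2 - d else d.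
Proof.
by move=> ltd3; rewrite /reflected_digit divnMDl // modnMDl divn_small ?modn_small ?addn0.
Qed.

Lemma reflected_digit_add_pow k u :
  reflected_digit (3 ^ k.+1 + u) = 2 - reflected_digit u.
Proof.
have ltu3 := ltn_pmod u (isT : 0 < 3).
have -> : 3 ^ k.+1 + u = (3 ^ k + u %/ 3) * 3 + u %% 3
  by rewrite expnS {1}(divn_eq u 3); lia.
rewrite reflected_digitE // oddD oddX orbT /reflected_digit.
by case: (odd (u %/ 3)) => /=; lia.
Qed.

Lemma reflected_digit_add_2pow k u :
  reflected_digit (2 * 3 ^ k.+1 + u) = reflected_digit u.
Proof.
have ltu3 := ltn_pmod u (isT : 0 < 3).
have -> : 2 * 3 ^ k.+1 + u = (2 * 3 ^ k + u %/ 3) * 3 + u %% 3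
  by rewrite expnS {1}(divn_eq u 3); lia.
by rewrite reflected_digitE // oddD oddM.
Qed.

Lemma reflected_digit_rev k u : u < 3 ^ k.+1 ->
  reflected_digit (3 ^ k.+1 - 1 - u) = 2 - reflected_digit u.
Proof.
move=> ltu.
have ltu3 := ltn_pmod u (isT : 0 < 3).
have ltq : u %/ 3 < 3 ^ k by rewrite ltn_divLR // -expnSr.
have -> : 3 ^ k.+1 - 1 - u = (3 ^ k - 1 - u %/ 3) * 3 + (2 - u %% 3)
  by rewrite expnS {1 2}(divn_eq u 3); lia.
rewrite reflected_digitE; last by lia.
have -> : odd (3 ^ k - 1 - u %/ 3) = odd (u %/ 3).
  by rewrite -subnDA oddB ?oddD ?oddX ?orbT /=; [case: odd | lia].
by rewrite /reflected_digit; case: odd => /=; lia.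
Qed.

Lemma divn_rev m d s : 0 < d -> s < m * d ->
  (m * d - 1 - s) %/ d = m - 1 - s %/ d.
Proof.
move=> d_gt0 lts.
have ltq : s %/ d < m by rewrite ltn_divLR.
have := ltn_pmod s d_gt0; have := divn_eq s d.
move: (s %/ d) (s %% d) ltq => q r ltq -> ltr.
have : q.+1 * d <= m * d by rewrite leq_mul2r ltq orbT.
rewrite mulSn => le_qd.
have -> : m * d - 1 - (q * d + r) = (m - 1 - q) * d + (d - 1 - r).
  by rewrite !mulnBl mul1n; lia.
by rewrite divnMDl // divn_small ?addn0 //; lia.
Qed.

Section GrayWordBlocks.

Variables (m j : nat).
Hypothesis ltjm : j < m.

Let pow_split : 3 ^ m = 3 ^ (m - j) * 3 ^ j.
Proof. by rewrite -expnD subnK // ltnW. Qed.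

Let pow_gt0 : 0 < 3 ^ j.
Proof. exact: expn_gt0. Qed.

Let gap_succ : m - j = (m - j).-1.+1.
Proof. by rewrite prednK // subn_gt0. Qed.

Lemma gray_word_add_pow s : gray_word (3 ^ m + s) j = 2 - gray_word s j.
Proof.
by rewrite /gray_word pow_split divnMDl // gap_succ reflected_digit_add_pow.
Qed.

Lemma gray_word_add_2pow s : gray_word (2 * 3 ^ m + s) j = gray_word s j.
Proof.
by rewrite /gray_word pow_split mulnA divnMDl // gap_succ reflected_digit_add_2pow.
Qed.

Lemma gray_word_rev s : s < 3 ^ m -> gray_word (3 ^ m - 1 - s) j = 2 - gray_word s j.
Proof.
rewrite /gray_word pow_split => lts.
by rewrite divn_rev // gap_succ reflected_digit_rev // -gap_succ ltn_divLR.
Qed.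

End GrayWordBlocks.

Lemma Kn_gray N r j : j < N -> r < 3 ^ N -> Kn N r j = gray_word r j.
Proof.
elim: N r j => [|m IH] r j //= ltjN ltr.
have ltq3 : r %/ 3 ^ m < 3 by rewrite ltn_divLR ?expn_gt0 // -expnS.
case: eqP => [->|/eqP neqjm].
  by rewrite /gray_word /reflected_digit; case: (r %/ 3 ^ m) ltq3 => [|[|[|]]].
have ltjm : j < m by rewrite ltn_neqAle neqjm -ltnS.
have lts := ltn_pmod r (expn_gt0 3 m).
rewrite [in gray_word r j](divn_eq r (3 ^ m)).
case: (r %/ 3 ^ m) ltq3 => [|[|[|]]] //= _.
- by rewrite IH.
- by rewrite IH ?mul1n ?gray_word_add_pow ?gray_word_rev //; lia.
- by rewrite IH ?gray_word_add_2pow.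
Qed.

Lemma krow_gray i : krow i =1 gray_word i.
Proof.
move=> j; rewrite /krow /Kentry Kn_gray //; first by lia.
apply: leq_trans (ltn_expl i (isT : 1 < 3)) _.
by rewrite leq_pexp2l //; lia.
Qed.

Lemma gray_word0 q d : d < 3 -> gray_word (q * 3 + d) 0 = if odd q then 2 - d else d.
Proof. by move=> ltd3; rewrite /gray_word expn0 divn1 reflected_digitE. Qed.

Lemma gray_wordS q d n : d < 3 -> gray_word (q * 3 + d) n.+1 = gray_word q n.
Proof.
by move=> ltd3; rewrite /gray_word expnS divnMA divnMDl // (divn_small ltd3) addn0.
Qed.

Lemma eq_aswap x y w v : w =1 v -> aswap x y w =1 aswap x y v.
Proof.
move=> eq_wv n; rewrite /aswap !eq_wv.
by congr (if _ then _ else _); apply: eq_has => k; rewrite /= eq_wv.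
Qed.

Lemma aswap0 x y w : aswap x y w 0 = if w 0 == x then y else if w 0 == y then x else w 0.
Proof. by []. Qed.

Lemma aswapS x y w n : aswap x y w n.+1 =
  if (w 0 == x) || (w 0 == y) then w n.+1 else aswap x y (fun k => w k.+1) n.
Proof.
by rewrite /aswap /= -(addn0 1) iotaDl has_map /=; case: ((w 0 == x) || (w 0 == y)).
Qed.

Lemma gray_word_succ r : gray_word r.+1 =1 aswap (odd r) (odd r).+1 (gray_word r).
Proof.
move=> n; elim: n r => [|n IH] r; rewrite (divn_eq r 3) oddD oddM andbT.
all: have := ltn_pmod r (isT : 0 < 3); move: (r %/ 3) (r %% 3) => q d.
all: have carry : q * 3 + 3 = q.+1 * 3 + 0 by rewrite mulSn addn0 addnC.
all: case: d => [|[|[|d]]] ltd3; last by [].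
(* For r = 3q + 2 the letter at 0 is the extreme of {0,1,2} outside the
   swapped pair, so the increment is carried to q, which has the parity of r. *)
all: rewrite -?addnS ?carry ?[in RHS]aswap0 ?[in RHS]aswapS.
all: rewrite ?(gray_word0 _ (isT : 0 < 3)) ?(gray_word0 _ (isT : 1 < 3)) ?(gray_word0 _ (isT : 2 < 3)).
all: rewrite ?(gray_wordS _ _ (isT : 0 < 3)) ?(gray_wordS _ _ (isT : 1 < 3)) ?(gray_wordS _ _ (isT : 2 < 3)).
all: rewrite /= ?negbK ?IH; case oq: (odd q) => //=.
all: by apply: eq_aswap => k; rewrite gray_wordS.
Qed.

Lemma krow_succ i : krow i.+1 =1 (if odd i then c_aut else a_aut) (krow i).
Proof.
move=> n; rewrite krow_gray gray_word_succ.
by case: (odd i); apply: eq_aswap => k; rewrite krow_gray.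
Qed.

Lemma t_autS i w : t_aut i.+1 w = (if odd i then c_aut else a_aut) (t_aut i w).
Proof. by rewrite /t_aut /= uphalf_half; case: (odd i). Qed.

Theorem mainTheorem9 (i : nat) :
  forall n : nat, krow i n = t_aut i (krow 0) n.
Proof.
elim: i => [|i IH] n //.
rewrite krow_succ t_autS.
by case: (odd i); apply: eq_aswap.
Qed.
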